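(* Let $p\neq2$ and let $L_{\mathbb{Z}_p}$ be a lattice of rank $m$ with integral non-degenerate quadratic form such that $L^*_{\mathbb{Z}_p}/L_{\mathbb{Z}_p}$ is cyclic, of order $p^\nu$. Then $$\mathrm{SO}(L_{\mathbb{Z}_p})/\mathrm{SO}'(L_{\mathbb{Z}_p})\cong\begin{cases}1&\text{if }\nu=0\text{ or }m=1,\\ \mathbb{Z}/2\mathbb{Z}&\text{otherwise.}\end{cases}$$
   Context: Bilinear form $\langle v,w\rangle=Q(v+w)-Q(v)-Q(w)$; integral means $Q(L_{\mathbb{Z}_p})\subseteq\mathbb{Z}_p$; $L^*_{\mathbb{Z}_p}=\{v\in L_{\mathbb{Q}_p}:\langle v,L_{\mathbb{Z}_p}\rangle\subseteq\mathbb{Z}_p\}$; $\mathrm{SO}(L_{\mathbb{Z}_p})$ is the stabilizer of $L_{\mathbb{Z}_p}$ in $\mathrm{SO}(L_{\mathbb{Q}_p})$, and the discriminant kernel $\mathrm{SO}'(L_{\mathbb{Z}_p})$ is the kernel of $\mathrm{SO}(L_{\mathbb{Z}_p})\to\mathrm{Aut}(L^*_{\mathbb{Z}_p}/L_{\mathbb{Z}_p})$. *)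

From HB Require Import structures.
From Stdlib Require Import ClassicalEpsilon FunctionalExtensionality ProofIrrelevance.
From mathcomp Require Import all_boot all_order all_algebra.

Set Implicit Arguments.
Unset Strict Implicit.
Unset Printing Implicit Defensive.

Import Order.TTheory GRing.Theory Num.Theory.
Local Open Scope ring_scope.

Section Padic.
Variable p : nat.

(* the base of the inverse system; it equals p whenever p is prime *)
Definition pbase : int := (maxn p 2)%:Z.
Definition pmod (n : nat) : int := pbase ^+ n.

(* compatible sequences (x_n)_n with x_n in Z/p^n Z (represented by the
   reduced representative in [0, p^n)) and x_{n+k} = x_n mod p^n *)
Definition padic_compat (f : nat -> int) :=
  forall n k, f n = modz (f (n + k)%N) (pmod n).

Record padic_int := PadicInt { pseq :> nat -> int; pseqP : padic_compat pseq }.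

Lemma padic_eq (x y : padic_int) : pseq x = pseq y -> x = y.
Proof.
case: x => f fP; case: y => g gP /= efg; subst g.
by rewrite (proof_irrelevance _ fP gP).
Qed.

Lemma pmodD n k : pmod (n + k) = pmod k * pmod n.
Proof. by rewrite /pmod exprD mulrC. Qed.

Lemma modz_dvdl (m d e : int) : modz (modz m (e * d)) d = modz m d.
Proof. by rewrite {2}(divz_eq m (e * d)) mulrA modzMDl. Qed.

Lemma pseq_mod (x : padic_int) n : modz (x n) (pmod n) = x n.
Proof. by rewrite {2}(pseqP x n 0) addn0. Qed.

Lemma pbase_gt1 : 1 < pbase.
Proof. by rewrite /pbase ltz_nat leq_max orbT. Qed.

Definition padic_eqb (x y : padic_int) : bool :=
  if excluded_middle_informative (x = y) then true else false.

Lemma padic_eqP : Equality.axiom padic_eqb.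
Proof.
move=> x y; rewrite /padic_eqb.
by case: excluded_middle_informative => h; constructor.
Qed.

HB.instance Definition _ := hasDecEq.Build padic_int padic_eqP.

Definition padic_find (P : pred padic_int) (n : nat) : option padic_int :=
  match excluded_middle_informative (exists x, P x) with
  | left H => Some (proj1_sig (constructive_indefinite_description _ H))
  | right _ => None
  end.

Lemma padic_find_correct P n x : padic_find P n = Some x -> P x.
Proof.
rewrite /padic_find; case: excluded_middle_informative => // H [<-].
exact: proj2_sig (constructive_indefinite_description _ H).
Qed.

Lemma padic_find_complete (P : pred padic_int) :
  (exists x, P x) -> exists n, padic_find P n.
Proof.
move=> H; exists 0%N; rewrite /padic_find.
by case: excluded_middle_informative.
Qed.

Lemma padic_find_ext (P Q : pred padic_int) :
  P =1 Q -> padic_find P =1 padic_find Q.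
Proof.
by move=> PQ; have -> : P = Q by apply: functional_extensionality.
Qed.

HB.instance Definition _ := hasChoice.Build padic_int
  padic_find_correct padic_find_complete padic_find_ext.

Lemma padic_zero_compat : padic_compat (fun _ => 0).
Proof. by move=> n k; rewrite mod0z. Qed.
Definition padic_zero := PadicInt padic_zero_compat.

Lemma padic_one_compat : padic_compat (fun n => modz 1 (pmod n)).
Proof. by move=> n k; rewrite pmodD modz_dvdl. Qed.
Definition padic_one := PadicInt padic_one_compat.

Lemma padic_add_compat (x y : padic_int) :
  padic_compat (fun n => modz (x n + y n) (pmod n)).
Proof.
move=> n k; rewrite pmodD modz_dvdl (pseqP x n k) (pseqP y n k).
by rewrite modzDm.
Qed.
Definition padic_add x y := PadicInt (padic_add_compat x y).

Lemma padic_opp_compat (x : padic_int) :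
  padic_compat (fun n => modz (- x n) (pmod n)).
Proof.
by move=> n k; rewrite pmodD modz_dvdl (pseqP x n k) modzNm.
Qed.
Definition padic_opp x := PadicInt (padic_opp_compat x).

Lemma padic_mul_compat (x y : padic_int) :
  padic_compat (fun n => modz (x n * y n) (pmod n)).
Proof.
move=> n k; rewrite pmodD modz_dvdl (pseqP x n k) (pseqP y n k).
by rewrite modzMm.
Qed.
Definition padic_mul x y := PadicInt (padic_mul_compat x y).

Lemma padic_addA : associative padic_add.
Proof.
move=> x y z; apply: padic_eq => /=; apply: functional_extensionality => n.
by rewrite modzDml modzDmr addrA.
Qed.

Lemma padic_addC : commutative padic_add.
Proof.
move=> x y; apply: padic_eq => /=; apply: functional_extensionality => n.
by rewrite addrC.
Qed.

Lemma padic_add0 : left_id padic_zero padic_add.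
Proof.
move=> x; apply: padic_eq => /=; apply: functional_extensionality => n.
by rewrite add0r pseq_mod.
Qed.

Lemma padic_addN : left_inverse padic_zero padic_opp padic_add.
Proof.
move=> x; apply: padic_eq => /=; apply: functional_extensionality => n.
by rewrite modzDml addNr mod0z.
Qed.

HB.instance Definition _ := GRing.isZmodule.Build padic_int
  padic_addA padic_addC padic_add0 padic_addN.

Lemma padic_mulA : associative padic_mul.
Proof.
move=> x y z; apply: padic_eq => /=; apply: functional_extensionality => n.
by rewrite modzMml modzMmr mulrA.
Qed.

Lemma padic_mulC : commutative padic_mul.
Proof.
move=> x y; apply: padic_eq => /=; apply: functional_extensionality => n.
by rewrite mulrC.
Qed.

Lemma padic_mul1 : left_id padic_one padic_mul.
Proof.
move=> x; apply: padic_eq => /=; apply: functional_extensionality => n.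
by rewrite modzMml mul1r pseq_mod.
Qed.

Lemma padic_mulDl : left_distributive padic_mul padic_add.
Proof.
move=> x y z; apply: padic_eq => /=; apply: functional_extensionality => n.
by rewrite modzMml modzDm mulrDl.
Qed.

Lemma padic_one_neq0 : padic_one != padic_zero.
Proof.
apply/eqP => /(congr1 (fun x : padic_int => pseq x 1%N)) /=.
rewrite /pmod expr1 modz_small; first by [].
by rewrite ler01 pbase_gt1.
Qed.

HB.instance Definition _ := GRing.Zmodule_isComNzRing.Build padic_int
  padic_mulA padic_mulC padic_mul1 padic_mulDl padic_one_neq0.

End Padic.

Notation "''Z_p[' p ]" := (padic_int p) (at level 8, format "''Z_p[' p ]").

(* A lattice of rank m is L = Z_p^m (row vectors 'rV_m); an integral   *)
(* quadratic form on it is v |-> v A v^T for a matrix A over Z_p       *)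
(* (every integral quadratic form on Z_p^m arises this way).           *)

Section Lattice.
Variables (R : comNzRingType) (m : nat) (A : 'M[R]_m).

Definition qform (v : 'rV[R]_m) : R := (v *m A *m v^T) ord0 ord0.

Definition bform (v w : 'rV[R]_m) : R := qform (v + w) - qform v - qform w.

Definition gram : 'M[R]_m := \matrix_(i, j) bform (delta_mx 0 i) (delta_mx 0 j).

(* non-degenerate: the Gram matrix has non-zero determinant
   (equivalently, the form is non-degenerate on L (x) Q_p) *)
Definition qf_nondegenerate : Prop := \det gram != 0.

(* Elements of the dual lattice L^* are identified with Z_p-linear
   functionals phi : L -> Z_p (given by their values on the basis,
   as a row vector); phi(w) = sum_i phi_i w_i.  L sits inside L^* via
   v |-> <v, .>. *)
Definition feval (phi w : 'rV[R]_m) : R := \sum_i phi ord0 i * w ord0 i.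

Definition in_lattice (phi : 'rV[R]_m) : Prop :=
  exists v : 'rV[R]_m, forall w, feval phi w = bform v w.

Definition disc_cyclic_of_order (N : nat) : Prop :=
  exists phi0 : 'rV[R]_m,
    [/\ forall phi, exists k : nat, in_lattice (phi - phi0 *+ k),
        in_lattice (phi0 *+ N)
      & forall k : nat, (0 < k < N)%N -> ~ in_lattice (phi0 *+ k)].

(* SO(L): Z_p-linear maps v |-> v g of L preserving Q, of determinant 1
   (these are exactly the elements of SO(L_Q_p) stabilizing L) *)
Definition SO_lat (g : 'M[R]_m) : Prop :=
  (forall v, qform (v *m g) = qform v) /\ \det g = 1.

Definition acts_trivially_on_disc (g : 'M[R]_m) : Prop :=
  forall phi : 'rV[R]_m,
    in_lattice (\row_j (feval phi (delta_mx 0 j) - feval phi (delta_mx 0 j *m g))).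

Definition SO'_lat (g : 'M[R]_m) : Prop := SO_lat g /\ acts_trivially_on_disc g.

End Lattice.

(* For a normal subgroup H of G (given as predicates on matrices),
   G/H is trivial, resp. G/H is isomorphic to Z/2Z (i.e. H has index 2). *)
Definition quotient_trivial (R : comNzRingType) (m : nat)
  (G H : 'M[R]_m -> Prop) : Prop := forall g, G g -> H g.

Definition quotient_is_Z2 (R : comNzRingType) (m : nat)
  (G H : 'M[R]_m -> Prop) : Prop :=
  exists g0, [/\ G g0, ~ H g0 &
    forall g, G g -> H g \/ exists k, H k /\ g = g0 *m k].

From Stdlib Require Import Classical FunctionalExtensionality.
From mathcomp Require Import all_boot all_order all_algebra.
From mathcomp Require Import ring.

(* An element g of SO(L) acts on the cyclic group L^*/L of order N = p^nu by
   multiplication by some u.  If N phi0 = w0 B for a generator phi0, the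
   discriminant form value <phi0, w0>/N is g-invariant and <phi0, w0> is a
   p-adic unit, so u^2 = 1 mod N, i.e. u = 1 or u = -1 mod N as p is odd; the
   two are distinct since N > 2.  Thus SO(L)/SO'(L) embeds in {1, -1}.  The
   sign -1 is attained when nu > 0 and m > 1: by -1 if m is even, and by
   -1 composed with the reflection in a vector of unit norm if m is odd; such
   a vector exists, for otherwise the Gram matrix vanishes mod p and L^*/L
   surjects onto (Z/p)^m, which is not cyclic. *)

Set Implicit Arguments.
Unset Strict Implicit.
Unset Printing Implicit Defensive.
Import Order.TTheory GRing.Theory Num.Theory.
Local Open Scope ring_scope.

Lemma modz_inv_uniq (a b x d : int) :
  (a * x = 1 %[mod d])%Z -> (b * x = 1 %[mod d])%Z -> (a = b %[mod d])%Z.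
Proof.
move=> ha hb.
rewrite -[a]mulr1 -modzMmr -hb modzMmr mulrA [a * b]mulrC -mulrA.
by rewrite -modzMmr ha modzMmr mulr1.
Qed.

Section PadicIntegers.
Variable p : nat.
Hypothesis p_prime : prime p.
Local Notation R := ('Z_p[p]).

(* [x 1%N], the first level of [x], is its residue modulo [p]. *)

Lemma padic_addE (x y : R) k : (x + y) k = ((x k + y k) %% pmod p k)%Z.
Proof. by []. Qed.
Lemma padic_mulE (x y : R) k : (x * y) k = ((x k * y k) %% pmod p k)%Z.
Proof. by []. Qed.
Lemma padic_oppE (x : R) k : (- x) k = ((- x k) %% pmod p k)%Z.
Proof. by []. Qed.
Lemma padic_oneE k : (1 : R) k = (1 %% pmod p k)%Z.
Proof. by []. Qed.

Lemma pmodE k : pmod p k = (p%:Z) ^+ k.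
Proof. by rewrite /pmod /pbase (maxn_idPl (prime_gt1 p_prime)). Qed.

Lemma padic_natE n k : (n%:R : R) k = (n%:Z %% pmod p k)%Z.
Proof.
elim: n => [|n IH]; first by rewrite mod0z.
by rewrite mulrS padic_addE padic_oneE IH modzDm intS.
Qed.

Lemma padic_intE z k : (z%:~R : R) k = (z %% pmod p k)%Z.
Proof.
case: z => n; first by rewrite padic_natE.
by rewrite NegzE mulrNz padic_oppE padic_natE modzNm.
Qed.

Lemma padic_mulp_eq0 (x : R) : p%:R * x = 0 -> x = 0.
Proof.
move=> px0; apply: padic_eq; apply: functional_extensionality => n.
have : (p%:R * x : R) n.+1 = 0 by rewrite px0.
rewrite padic_mulE padic_natE modzMml => /dvdz_mod0P.
rewrite pmodE exprS dvdz_mul2l; last by rewrite eqz_nat -lt0n prime_gt0.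
by move=> dvd_xn; rewrite (pseqP x n 1) addn1; apply/dvdz_mod0P; rewrite pmodE.
Qed.

Lemma padic_mulpX_eq0 (x : R) k : (p ^ k)%:R * x = 0 -> x = 0.
Proof.
elim: k x => [|k IH] x; first by rewrite mul1r.
by rewrite expnS natrM -mulrA => /padic_mulp_eq0 /IH.
Qed.

Lemma padic_res_modp (x : R) n : (x n.+1 = x 1%N %[mod p])%Z.
Proof.
have := pseqP x 1 n; rewrite add1n pmodE expr1 => ->.
by rewrite modz_mod.
Qed.

Lemma padic_res_small (x : R) : (x 1%N %% p)%Z = x 1%N.
Proof. by have := pseq_mod x 1; rewrite pmodE expr1. Qed.

Lemma padic_dvdp_res (x : R) n : x 1%N = 0 -> (p%:Z %| x n.+1)%Z.
Proof.
by move=> x1; apply/dvdz_mod0P; rewrite padic_res_modp x1 mod0z.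
Qed.

Lemma padic_divp (x : R) : x 1%N = 0 -> exists y : R, x = p%:R * y.
Proof.
move=> x1.
have p_neq0 : (p%:Z) != 0 by rewrite eqz_nat -lt0n prime_gt0.
pose f n := (x n.+1 %/ p%:Z)%Z.
have fP : padic_compat p f.
  move=> n k; rewrite /f.
  have := pseqP x n.+1 k.
  rewrite addSn -{1}(divzK (padic_dvdp_res n x1)).
  rewrite -{1}(divzK (padic_dvdp_res (n + k) x1)) pmodE exprS.
  rewrite [_ * p%:Z]mulrC [_ * p%:Z]mulrC -mulz_modr ?ltz_nat ?prime_gt0 //.
  by move=> /(congr1 (fun z => (z %/ p%:Z)%Z)); rewrite !mulKz // pmodE.
exists (PadicInt fP); apply: padic_eq; apply: functional_extensionality => n.
rewrite padic_mulE padic_natE /= /f modzMml mulrC divzK.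
  by rewrite (pseqP x n 1) addn1.
by case: n => [|n]; apply: padic_dvdp_res.
Qed.

Lemma padic_coprime_res (x : R) n : x 1%N != 0 -> coprimez (x n.+1) p.
Proof.
move=> x1; rewrite coprimezE coprime_sym prime_coprime //.
apply: contra x1 => dvd_x; apply/eqP.
by rewrite -padic_res_small -(padic_res_modp x n); apply/dvdz_mod0P; rewrite dvdzE.
Qed.

(* The inverse is assembled level-wise from Bezout coefficients modulo p^n. *)
Lemma padic_unit_res (x : R) : x 1%N != 0 -> exists y : R, x * y = 1.
Proof.
move=> x1.
pose f n := (projT1 (Bezoutz (x n) (pmod p n)) %% pmod p n)%Z.
have f_inv n : (f n * x n = 1 %[mod pmod p n])%Z.
  rewrite /f modzMml; case: (Bezoutz (x n) (pmod p n)) => a [b /= hab].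
  case: n hab => [|n] hab; first by rewrite /pmod expr0 !modz1.
  have /eqP <- : coprimez (x n.+1) (pmod p n.+1).
    by rewrite pmodE; apply: coprimezXr; apply: padic_coprime_res.
  by rewrite -hab addrC modzMDl.
have fP : padic_compat p f.
  move=> n k.
  have f_inv' : (f (n + k)%N * x n = 1 %[mod pmod p n])%Z.
    rewrite (pseqP x n k) modzMmr.
    move: (f_inv (n + k)%N); rewrite pmodD.
    by move=> /(congr1 (fun z => (z %% pmod p n)%Z)); rewrite !modz_dvdl.
  by have := modz_inv_uniq (f_inv n) f_inv'; rewrite /f modz_mod => ->.
exists (PadicInt fP); apply: padic_eq; apply: functional_extensionality => n.
by rewrite padic_mulE padic_oneE /= mulrC f_inv.
Qed.

Lemma padic_dvd_int_mul (z : int) (c y : R) k : c 1%N != 0 ->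
  z%:~R * c = (p ^ k)%:R * y -> ((p ^ k)%:Z %| z)%Z.
Proof.
move=> c1 zc.
have : (z%:~R * c : R) k = ((p ^ k)%:R * y : R) k by rewrite zc.
rewrite !padic_mulE padic_intE padic_natE modzMml.
have -> : (p ^ k)%:Z = pmod p k by rewrite pmodE -natz natrX natz.
rewrite modzz mul0r mod0z.
move=> /dvdz_mod0P; clear zc; case: k => [|k]; first by rewrite /pmod expr0 dvd1z.
rewrite Gauss_dvdzl // pmodE coprimez_sym.
by apply: coprimezXr; apply: padic_coprime_res.
Qed.

Lemma padic_res_add0 (x y : R) : x 1%N = 0 -> y 1%N = 0 -> (x + y) 1%N = 0.
Proof. by move=> x1 y1; rewrite padic_addE x1 y1 mod0z. Qed.
Lemma padic_res_opp0 (x : R) : x 1%N = 0 -> (- x) 1%N = 0.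
Proof. by move=> x1; rewrite padic_oppE x1 oppr0 mod0z. Qed.
Lemma padic_res_mul0l (x y : R) : x 1%N = 0 -> (x * y) 1%N = 0.
Proof. by move=> x1; rewrite padic_mulE x1 mul0r mod0z. Qed.
Lemma padic_res_mul0r (x y : R) : y 1%N = 0 -> (x * y) 1%N = 0.
Proof. by move=> y1; rewrite padic_mulE y1 mulr0 mod0z. Qed.

Lemma padic_res_subMn (x y : R) (k : nat) :
  (x - y *+ k) 1%N = ((x 1%N - y 1%N * k%:Z) %% p%:Z)%Z.
Proof.
rewrite -mulr_natr padic_addE padic_oppE padic_mulE padic_natE.
by rewrite modzMmr modzNm modzDmr pmodE expr1.
Qed.

Hypothesis p_neq2 : p != 2%N.

Lemma prime_odd_gt2 : (2 < p)%N.
Proof. by have := prime_gt1 p_prime; rewrite leq_eqVlt eq_sym (negbTE p_neq2). Qed.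

Lemma padic_double_inj (a b : R) : a + a = b + b -> a = b.
Proof.
have two_res : (2%:R : R) 1%N != 0.
  by rewrite padic_natE pmodE expr1 modz_small // ltz_nat prime_odd_gt2.
have [y two_y] := padic_unit_res two_res.
move=> ab; rewrite -[a]mul1r -[b]mul1r -two_y [2%:R * y]mulrC -!mulrA.
by rewrite !mulr_natl !mulr2n ab.
Qed.

End PadicIntegers.

Section DotProduct.
Variables (R : comNzRingType) (m : nat).
Implicit Types (x y : 'rV[R]_m) (M : 'M[R]_m).

Definition mxdot x y : R := (x *m y^T) 0 0.

Lemma mxdotC x y : mxdot x y = mxdot y x.
Proof.
by rewrite /mxdot -[in RHS](trmxK (y *m x^T)) trmx_mul trmxK [in RHS]mxE.
Qed.

Lemma mxdotMl x M y : mxdot (x *m M) y = mxdot x (y *m M^T).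
Proof. by rewrite /mxdot trmx_mul trmxK mulmxA. Qed.

Lemma mxdotDl x1 x2 y : mxdot (x1 + x2) y = mxdot x1 y + mxdot x2 y.
Proof. by rewrite /mxdot mulmxDl mxE. Qed.
Lemma mxdotDr x y1 y2 : mxdot x (y1 + y2) = mxdot x y1 + mxdot x y2.
Proof. by rewrite mxdotC mxdotDl !(mxdotC _ x). Qed.
Lemma mxdotNl x y : mxdot (- x) y = - mxdot x y.
Proof. by rewrite /mxdot mulNmx mxE. Qed.
Lemma mxdotNr x y : mxdot x (- y) = - mxdot x y.
Proof. by rewrite mxdotC mxdotNl mxdotC. Qed.
Lemma mxdotZl a x y : mxdot (a *: x) y = a * mxdot x y.
Proof. by rewrite /mxdot -scalemxAl mxE. Qed.
Lemma mxdotZr a x y : mxdot x (a *: y) = a * mxdot x y.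
Proof. by rewrite mxdotC mxdotZl mxdotC. Qed.
Lemma mxdot0r x : mxdot x 0 = 0.
Proof. by rewrite /mxdot trmx0 mulmx0 mxE. Qed.

Lemma mxdot_delta x j : mxdot x (delta_mx 0 j) = x 0 j.
Proof. by rewrite /mxdot trmx_delta -colE mxE. Qed.

Lemma mxdot_delta_mul M i j : mxdot (delta_mx 0 i *m M) (delta_mx 0 j) = M i j.
Proof. by rewrite mxdot_delta -rowE mxE. Qed.

Lemma feval_mxdot x y : feval x y = mxdot x y.
Proof. by rewrite /feval /mxdot mxE; apply: eq_bigr => i _; rewrite mxE. Qed.

End DotProduct.

Section GramMatrix.
Variables (R : comNzRingType) (m : nat) (A : 'M[R]_m).
Implicit Types (v w phi : 'rV[R]_m) (g : 'M[R]_m).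

Lemma qformE v : qform A v = mxdot (v *m A) v.
Proof. by []. Qed.

Lemma bform_polar v w : bform A v w = mxdot (v *m (A + A^T)) w.
Proof.
rewrite /bform !qformE mulmxDl !mxdotDl !mxdotDr mulmxDr mxdotDl.
by rewrite [mxdot (w *m A) v]mxdotMl [mxdot w _]mxdotC; ring.
Qed.

Lemma gramE : gram A = A + A^T.
Proof. by apply/matrixP => i j; rewrite mxE bform_polar mxdot_delta_mul. Qed.

Lemma gram_tr : (gram A)^T = gram A.
Proof. by rewrite gramE linearD /= trmxK addrC. Qed.

Lemma bformE v w : bform A v w = mxdot (v *m gram A) w.
Proof. by rewrite gramE bform_polar. Qed.

Lemma bform_diag v : mxdot (v *m gram A) v = qform A v + qform A v.
Proof.
rewrite gramE mulmxDr mxdotDl qformE.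
by rewrite [mxdot (v *m A^T) v]mxdotMl trmxK [mxdot v _]mxdotC.
Qed.

Definition in_lat phi := exists v, phi = v *m gram A.

Lemma in_latticeE phi : in_lattice A phi <-> in_lat phi.
Proof.
split=> [[v hv]|[v ->]]; last by exists v => w; rewrite feval_mxdot bformE.
exists v; apply/rowP => j.
by have := hv (delta_mx 0 j); rewrite feval_mxdot bformE !mxdot_delta.
Qed.

Lemma in_lat0 : in_lat 0. Proof. by exists 0; rewrite mul0mx. Qed.
Lemma in_latD phi1 phi2 : in_lat phi1 -> in_lat phi2 -> in_lat (phi1 + phi2).
Proof. by move=> [a ->] [b ->]; exists (a + b); rewrite mulmxDl. Qed.
Lemma in_latN phi : in_lat phi -> in_lat (- phi).
Proof. by move=> [a ->]; exists (- a); rewrite mulNmx. Qed.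
Lemma in_latB phi1 phi2 : in_lat phi1 -> in_lat phi2 -> in_lat (phi1 - phi2).
Proof. by move=> h1 h2; apply: in_latD => //; apply: in_latN. Qed.
Lemma in_latZ a phi : in_lat phi -> in_lat (a *: phi).
Proof. by move=> [b ->]; exists (a *: b); rewrite scalemxAl. Qed.
Lemma in_lat_gram v : in_lat (v *m gram A). Proof. by exists v. Qed.

Lemma qform_inv_gram g :
  (forall v, qform A (v *m g) = qform A v) -> g *m gram A *m g^T = gram A.
Proof.
move=> gQ; apply/matrixP => i j.
have : bform A (delta_mx 0 i *m g) (delta_mx 0 j *m g) =
       bform A (delta_mx 0 i) (delta_mx 0 j).
  by rewrite /bform -mulmxDl !gQ.
rewrite !bformE => e.
by rewrite -[LHS]mxdot_delta_mul !mulmxA mxdotMl trmxK e mxdot_delta_mul.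
Qed.

Lemma gram_inv_qform g : (forall a b : R, a + a = b + b -> a = b) ->
  g *m gram A *m g^T = gram A -> forall v, qform A (v *m g) = qform A v.
Proof.
move=> double_inj gB v; apply: double_inj; rewrite -!bform_diag.
have vgB : v *m g *m gram A *m g^T = v *m gram A by rewrite -[in RHS]gB !mulmxA.
by rewrite mxdotC mxdotMl vgB mxdotC.
Qed.

End GramMatrix.

Section DiscriminantAction.
Variables (R : comNzRingType) (m : nat) (A : 'M[R]_m).
Local Notation B := (gram A).
Local Notation in_lat := (in_lat A).
Implicit Types (phi : 'rV[R]_m) (g h : 'M[R]_m).

Lemma in_lat_mul_tr g g' phi : g' *m g = 1%:M -> g *m B *m g^T = B ->
  in_lat phi -> in_lat (phi *m g^T).
Proof.
move=> g'g gB [v ->]; exists (v *m g').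
have Bg : B *m g^T = g' *m B by rewrite -{2}gB !mulmxA g'g mul1mx.
by rewrite -mulmxA Bg mulmxA.
Qed.

Lemma SO_lat_adjK g : SO_lat A g -> \adj g *m g = 1%:M.
Proof. by case=> _ detg; rewrite mul_adj_mx detg. Qed.

Lemma SO_lat_adjKr g : SO_lat A g -> g *m \adj g = 1%:M.
Proof. by case=> _ detg; rewrite mul_mx_adj detg. Qed.

Lemma SO_lat_in_lat g : SO_lat A g -> forall phi, in_lat phi -> in_lat (phi *m g^T).
Proof.
move=> SOg phi; apply: (in_lat_mul_tr (SO_lat_adjK SOg)).
by apply: qform_inv_gram; case: SOg.
Qed.

Lemma SO_lat_mul g h : SO_lat A g -> SO_lat A h -> SO_lat A (g *m h).
Proof.
move=> [gQ detg] [hQ deth]; split; last by rewrite det_mulmx detg deth mulr1.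
by move=> v; rewrite mulmxA hQ gQ.
Qed.

Lemma SO_lat_adj g : SO_lat A g -> SO_lat A (\adj g).
Proof.
move=> SOg; have [gQ detg] := SOg; split.
  by move=> v; rewrite -[in LHS](gQ (v *m \adj g)) -mulmxA SO_lat_adjK ?mulmx1.
have := congr1 determinant (SO_lat_adjKr SOg).
by rewrite det_mulmx detg mul1r det1.
Qed.

(* [g] acts on [L^*/L] as multiplication by [s]; the dual action of [g] on
   row vectors of [L^*] is [phi |-> phi *m g^T]. *)
Definition acts_by g (s : int) := forall phi, in_lat (phi *m g^T - s%:~R *: phi).

Lemma acts_trivially_on_discE g : acts_trivially_on_disc A g <-> acts_by g 1.
Proof.
have row_act phi : \row_j (feval phi (delta_mx 0 j) - feval phi (delta_mx 0 j *m g))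
    = - (phi *m g^T - 1%:~R *: phi).
  apply/rowP => j; rewrite scale1r opprB !mxE !feval_mxdot mxdot_delta.
  by rewrite mxdotC mxdotMl mxdotC mxdot_delta mxE.
split=> h phi; first by rewrite -[_ - _]opprK -row_act; apply/in_latN/in_latticeE.
by rewrite row_act; apply/in_latticeE/in_latN.
Qed.

Lemma acts_by1 : acts_by 1%:M 1.
Proof. by move=> phi; rewrite trmx1 mulmx1 scale1r subrr; exact: in_lat0. Qed.

Lemma acts_by_mul g h s t : acts_by g s -> acts_by h t ->
  (forall phi, in_lat phi -> in_lat (phi *m h^T)) -> acts_by (h *m g) (s * t).
Proof.
move=> gs ht h_lat phi.
have -> : phi *m (h *m g)^T - (s * t)%:~R *: phi =
    (phi *m g^T - s%:~R *: phi) *m h^T + s%:~R *: (phi *m h^T - t%:~R *: phi).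
  rewrite trmx_mul mulmxA mulmxBl -scalemxAl scalerBr scalerA intrM.
  by rewrite addrA subrK.
by apply: in_latD; [apply: h_lat | apply: in_latZ].
Qed.

Section CyclicDiscriminant.
Variables (N : nat) (phi0 : 'rV[R]_m).
Hypothesis phi0_gen : forall phi, exists k : nat, in_lat (phi - phi0 *+ k).
Hypothesis phi0_N : in_lat (phi0 *+ N).
Hypothesis phi0_order : forall k : nat, (0 < k < N)%N -> ~ in_lat (phi0 *+ k).
Hypothesis N_gt0 : (0 < N)%N.

Lemma in_lat_scale_gen (z : int) : (N%:Z %| z)%Z -> in_lat (z%:~R *: phi0).
Proof.
move=> /dvdzP [q ->]; rewrite intrM -scalerA.
by apply: in_latZ; rewrite scaler_int -pmulrn.
Qed.

Lemma dvdz_in_lat_scale_gen (z : int) : in_lat (z%:~R *: phi0) -> (N%:Z %| z)%Z.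
Proof.
move=> zphi0.
have [r z_modN] : exists r : nat, (z %% N%:Z)%Z = r%:Z.
  by exists `|(z %% N%:Z)%Z|%N; rewrite gez0_abs // modz_ge0 // gt_eqF ?ltz_nat.
have r_lat : in_lat (phi0 *+ r).
  have := in_latB zphi0 (in_lat_scale_gen (dvdz_mull (z %/ N%:Z)%Z (dvdzz N%:Z))).
  rewrite -scalerBl -intrB {1}(divz_eq z N%:Z) z_modN addrAC subrr add0r.
  by rewrite scaler_int -pmulrn.
have r_lt_N : (r < N)%N by rewrite -ltz_nat -z_modN ltz_pmod ?ltz_nat.
case: r z_modN r_lat r_lt_N => [|r] z_modN r_lat r_lt_N; first exact/dvdz_mod0P.
by case: (phi0_order (k := r.+1)); rewrite ?r_lt_N.
Qed.

Lemma acts_by_uniq g s t : acts_by g s -> acts_by g t -> (N%:Z %| s - t)%Z.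
Proof.
move=> gs gt; apply: dvdz_in_lat_scale_gen.
have := in_latB (gt phi0) (gs phi0).
suff -> : phi0 *m g^T - t%:~R *: phi0 - (phi0 *m g^T - s%:~R *: phi0) =
          (s - t)%:~R *: phi0 by [].
by apply/rowP => j; rewrite !mxE intrB; ring.
Qed.

Lemma acts_by_congr g s t : acts_by g s -> (N%:Z %| s - t)%Z -> acts_by g t.
Proof.
move=> gs dvd_st phi; have [k phik] := phi0_gen phi.
have -> : phi *m g^T - t%:~R *: phi = (phi *m g^T - s%:~R *: phi)
   + ((s - t)%:~R *: (phi - phi0 *+ k) + ((s - t) * k%:Z)%:~R *: phi0).
  by apply/rowP => j; rewrite !mxE !mulmxnE !intrM !intrB; ring.
apply: in_latD; first exact: gs.
apply: in_latD; first exact: in_latZ.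
exact/in_lat_scale_gen/dvdz_mulr.
Qed.

(* [g] maps the generator to some multiple [phi0 *+ u]; linearity does the rest. *)
Lemma acts_by_exists g : (forall phi, in_lat phi -> in_lat (phi *m g^T)) ->
  exists u : int, acts_by g u.
Proof.
move=> g_lat; have [u gphi0] := phi0_gen (phi0 *m g^T).
exists u%:Z => phi; have [j phij] := phi0_gen phi.
have -> : phi *m g^T - u%:Z%:~R *: phi =
   ((phi - phi0 *+ j) *m g^T - u%:Z%:~R *: (phi - phi0 *+ j))
   + j%:R *: (phi0 *m g^T - phi0 *+ u).
  rewrite mulmxBl -!scaler_nat -scalemxAl.
  set X := phi *m g^T; set Y := phi0 *m g^T.
  by apply/rowP => i; rewrite !mxE /=; ring.
apply: in_latD; last exact: in_latZ.
by apply: in_latB; [apply: g_lat | apply: in_latZ].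
Qed.

End CyclicDiscriminant.
End DiscriminantAction.

Section DiscriminantForm.
Variables (R : comNzRingType) (m : nat) (A : 'M[R]_m).
Local Notation B := (gram A).

(* With [N *: phi0 = w0 *m B], the value [mxdot phi0 w0 / N] of the
   discriminant form at [phi0] is invariant under [g] modulo [R], while [g]
   multiplies [phi0] by [u] modulo [L]; hence [(u^2 - 1) mxdot phi0 w0 = 0]
   modulo [N]. *)
Lemma acts_by_sqr_sub1 (N : nat) (phi0 w0 : 'rV[R]_m) g (u : int) :
  (forall x : R, N%:R * x = 0 -> x = 0) -> N%:R *: phi0 = w0 *m B ->
  SO_lat A g -> acts_by A g u ->
  exists y, (u * u - 1)%:~R * mxdot phi0 w0 = N%:R * y.
Proof.
move=> N_tf Nphi0 SOg gu.
have gB : g *m B *m g^T = B by apply: qform_inv_gram; case: SOg.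
have adjg := SO_lat_adjK SOg.
have [v1 v1_def] := gu phi0.
have gphi0 : phi0 *m g^T = u%:~R *: phi0 + v1 *m B by rewrite -v1_def addrC subrK.
have Bg : B *m g^T = \adj g *m B by rewrite -{2}gB !mulmxA adjg mul1mx.
pose z := w0 *m \adj g - u%:~R *: w0 - N%:R *: v1.
have zB : z *m B = 0.
  rewrite /z !mulmxBl -!scalemxAl -mulmxA -Bg mulmxA -Nphi0 -scalemxAl gphi0.
  by set X := v1 *m B; apply/rowP => i; rewrite !mxE; ring.
have phi0z : mxdot phi0 z = 0.
  by apply: N_tf; rewrite -mxdotZl Nphi0 mxdotMl gram_tr zB mxdot0r.
have inv : mxdot (phi0 *m g^T) (w0 *m \adj g) = mxdot phi0 w0.
  by rewrite mxdotMl trmxK -mulmxA adjg mulmx1.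
have w0g : w0 *m \adj g = u%:~R *: w0 + N%:R *: v1 + z.
  by rewrite /z; set Y := w0 *m \adj g; apply/rowP => i; rewrite !mxE; ring.
clearbody z.
rewrite gphi0 w0g !mxdotDl !mxdotDr !mxdotZl !mxdotZr phi0z in inv.
rewrite [mxdot (v1 *m B) w0]mxdotMl gram_tr -Nphi0 mxdotZr in inv.
rewrite [mxdot (v1 *m B) z]mxdotMl gram_tr zB mxdot0r in inv.
exists (- (u%:~R * mxdot phi0 v1 + u%:~R * mxdot v1 phi0 + mxdot (v1 *m B) v1)).
apply/eqP; rewrite -subr_eq0; apply/eqP.
transitivity (u%:~R * (u%:~R * mxdot phi0 w0) + u%:~R * (N%:R * mxdot phi0 v1) +
    u%:~R * 0 + (u%:~R * (N%:R * mxdot v1 phi0) + N%:R * mxdot (v1 *m B) v1 + 0)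
    - mxdot phi0 w0).
  by rewrite intrB intrM mulr1z; ring.
by rewrite inv subrr.
Qed.

End DiscriminantForm.

Lemma det_1_sub_rank1 (R : comNzRingType) m (U : 'M[R]_(m, 1)) (W : 'M[R]_(1, m)) :
  \det (1%:M - U *m W) = 1 - (W *m U) 0 0.
Proof.
have E1 : block_mx 1%:M U W 1%:M =
    block_mx (1%:M - U *m W) U 0 1%:M *m block_mx 1%:M 0 W 1%:M.
  by rewrite mulmx_block ?mulmx1 ?mul1mx ?mulmx0 ?mul0mx ?addr0 ?add0r subrK.
have E2 : block_mx 1%:M U W 1%:M =
    block_mx 1%:M 0 W (1%:M - W *m U) *m block_mx 1%:M U 0 1%:M.
  by rewrite mulmx_block ?mulmx1 ?mul1mx ?mulmx0 ?mul0mx ?addr0 ?add0r addrC subrK.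
have := congr1 determinant (etrans (esym E1) E2).
rewrite !det_mulmx det_ublock det_lblock det_ublock det_lblock !det1 !mulr1 mul1r.
by rewrite det_mx11 !mxE eqxx.
Qed.

Section Reflection.
Variables (R : comNzRingType) (m : nat) (A : 'M[R]_m).
Local Notation B := (gram A).
Variables (v : 'rV[R]_m) (c : R).
Hypothesis c_inv : c * qform A v = 1.

(* [x *m refl_mx = x - c <x, v> v] is the reflection in [v], as [c = Q(v)^-1]. *)
Definition refl_mx : 'M[R]_m := 1%:M - (B *m v^T) *m (c *: v : 'rV_m).

Lemma refl_tr_mul (phi : 'rV[R]_m) : phi - phi *m refl_mx^T = (phi *m (c *: v)^T *m v) *m B.
Proof.
rewrite /refl_mx linearB /= trmx1 !trmx_mul trmxK gram_tr.
by rewrite mulmxBr mulmx1 opprB addrC subrK !mulmxA.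
Qed.

Lemma det_refl : \det refl_mx = -1.
Proof.
rewrite det_1_sub_rank1 -scalemxAl mxE mulmxA -/(mxdot (v *m B) v) bform_diag.
by rewrite mulrDr c_inv opprD addrA subrr add0r.
Qed.

Lemma refl_gram : refl_mx *m B *m refl_mx^T = B.
Proof.
set U := B *m v^T; set W := c *: v.
have UT : U^T = v *m B by rewrite /U trmx_mul trmxK gram_tr.
have BW : B *m W^T = c *: U by rewrite /W linearZ /= -scalemxAr.
have WB : W *m B = c *: U^T by rewrite /W UT -scalemxAl.
have WBW : W *m B *m W^T = (c * (1 + 1))%:M.
  rewrite [LHS]mx11_scalar WB -scalemxAl mxE /W linearZ /= -scalemxAr mxE UT.
  rewrite -/(mxdot (v *m B) v) bform_diag.
  by congr (_%:M); rewrite mulrA [c * c]mulrC -mulrA mulrDr c_inv mulrDr mulr1.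
rewrite /refl_mx -/U -/W linearB /= trmx1 trmx_mul.
rewrite mulmxBl mul1mx !mulmxBr !mulmx1 mulmxBl.
have -> : U *m W *m B *m (W^T *m U^T) = U *m (W *m B *m W^T) *m U^T by rewrite !mulmxA.
have -> : B *m (W^T *m U^T) = c *: (U *m U^T) by rewrite mulmxA BW -scalemxAl.
have -> : U *m W *m B = c *: (U *m U^T) by rewrite -mulmxA WB -scalemxAr.
rewrite WBW mul_mx_scalar -scalemxAl.
by set X := U *m U^T; apply/matrixP => i j; rewrite !mxE; ring.
Qed.

End Reflection.

Lemma disc_cyclic_gen (R : comNzRingType) m (A : 'M[R]_m) N :
  disc_cyclic_of_order A N -> exists phi0 : 'rV[R]_m,
    [/\ forall phi, exists k : nat, in_lat A (phi - phi0 *+ k),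
        in_lat A (phi0 *+ N)
      & forall k : nat, (0 < k < N)%N -> ~ in_lat A (phi0 *+ k)].
Proof.
move=> [phi0 [gen ordN ord_min]]; exists phi0; split.
- by move=> phi; have [k ?] := gen phi; exists k; apply/in_latticeE.
- exact/in_latticeE.
- by move=> k k_range /in_latticeE; apply: ord_min.
Qed.

Lemma SO'_lat_disc_trivial (R : comNzRingType) m (A : 'M[R]_m) :
  disc_cyclic_of_order A 1 -> quotient_trivial (SO_lat A) (SO'_lat A).
Proof.
move=> /disc_cyclic_gen [phi0 [gen phi0_lat _]].
have all_lat phi : in_lat A phi.
  have [k phik] := gen phi.
  rewrite -(subrK (phi0 *+ k) phi) -[phi0 *+ k]mulr1n -mulrnA mulnC mulrnA.
  by apply: in_latD => //; rewrite -scaler_nat; apply: in_latZ.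
by move=> g SOg; split=> //; apply/acts_trivially_on_discE => phi; apply: all_lat.
Qed.

Lemma SO'_lat_rank1 (R : comNzRingType) (A : 'M[R]_1) :
  quotient_trivial (SO_lat A) (SO'_lat A).
Proof.
move=> g SOg; split=> //; apply/acts_trivially_on_discE.
have -> : g = 1%:M by rewrite [g]mx11_scalar -det_mx11; case: SOg => _ ->.
exact: acts_by1.
Qed.

Lemma dvdz_pX_sqr_sub1 (p k : nat) (u : int) : prime p -> p != 2%N ->
  ((p ^ k)%:Z %| u * u - 1)%Z -> ((p ^ k)%:Z %| u - 1)%Z \/ ((p ^ k)%:Z %| u + 1)%Z.
Proof.
move=> p_prime p_neq2.
have -> : u * u - 1 = (u - 1) * (u + 1) by ring.
have pXE : (p ^ k)%:Z = (p%:Z) ^+ k by rewrite -natz natrX natz.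
have dvdp_or_coprime z : (p%:Z %| z)%Z \/ coprimez (p%:Z ^+ k) z.
  case: (boolP (coprimez p%:Z z)) => pz; first by right; apply: coprimezXl.
  by left; move: pz; rewrite coprimezE absz_nat prime_coprime // dvdzE negbK.
case: (dvdp_or_coprime (u + 1)) => [dvd_p1|]; last first.
  by rewrite pXE => cop; left; rewrite -(Gauss_dvdzl _ cop).
case: (dvdp_or_coprime (u - 1)) => [dvd_m1|]; last first.
  by rewrite pXE => cop; right; rewrite -(Gauss_dvdzr _ cop).
have : (p%:Z %| (u + 1) - (u - 1))%Z by rewrite rpredB.
have -> : (u + 1) - (u - 1) = 2 by ring.
rewrite dvdzE absz_nat => /(dvdn_leq (isT : (0 < 2)%N)) p_le2.
by have := prime_odd_gt2 p_prime p_neq2; rewrite ltnNge p_le2.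
Qed.

Section OddPrimeCyclicDiscriminant.
Variables (p m nu : nat) (A : 'M['Z_p[p]]_m) (phi0 : 'rV['Z_p[p]]_m).
Hypotheses (p_prime : prime p) (p_neq2 : p != 2%N).
Local Notation N := (p ^ nu.+1)%N.
Local Notation B := (gram A).
Hypothesis phi0_gen : forall phi, exists k : nat, in_lat A (phi - phi0 *+ k).
Hypothesis phi0_N : in_lat A (phi0 *+ N).
Hypothesis phi0_order : forall k : nat, (0 < k < N)%N -> ~ in_lat A (phi0 *+ k).

(* [mxdot phi0 w0 / N] is the value of the discriminant form at the generator;
   it has exact denominator [N] since [phi0] has order [N]. *)
Lemma disc_value_unit (w0 : 'rV_m) : N%:R *: phi0 = w0 *m B -> (mxdot phi0 w0) 1%N != 0.
Proof.
move=> Nphi0; apply/negP => /eqP phi0w0.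
have w0_res i : (w0 0 i) 1%N = 0.
  have [k [l l_def]] := phi0_gen (delta_mx 0 i).
  have -> : w0 0 i = k%:R * mxdot w0 phi0 + N%:R * mxdot l phi0.
    rewrite -mxdot_delta -[delta_mx 0 i](subrK (phi0 *+ k)) l_def addrC.
    rewrite mxdotDr -scaler_nat mxdotZr [mxdot w0 (l *m B)]mxdotC mxdotMl gram_tr.
    by rewrite -Nphi0 mxdotZr.
  apply: padic_res_add0; first by apply: padic_res_mul0r; rewrite mxdotC.
  by apply: padic_res_mul0l; rewrite padic_natE pmodE // expr1 expnS PoszM modzMr.
have [y y_def] := fin_all_exists (fun i => padic_divp p_prime (w0_res i)).
have w0_div : w0 = p%:R *: \row_i y i by apply/rowP => i; rewrite !mxE y_def.
set Y := \row_i y i in w0_div.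
have pNphi0 : p%:R *: ((p ^ nu)%:R *: phi0 - Y *m B) = 0.
  by rewrite scalerBr scalerA -natrM -expnS Nphi0 w0_div -scalemxAl subrr.
have : (p ^ nu)%:R *: phi0 = Y *m B.
  apply/eqP; rewrite -subr_eq0; apply/eqP/rowP => i; rewrite [RHS]mxE.
  apply: (padic_mulp_eq0 p_prime).
  by have := congr1 (fun M : 'rV_m => M 0 i) pNphi0; rewrite mxE [RHS]mxE.
rewrite scaler_nat => Y_lat; apply: (phi0_order (k := (p ^ nu)%N)); last by exists Y.
by rewrite expn_gt0 prime_gt0 //= ltn_exp2l // prime_gt1.
Qed.

Lemma gen_coord_modp (i j : 'I_m) (k : nat) (l : 'rV_m) :
  (forall (v : 'rV_m) j, ((v *m B) 0 j) 1%N = 0) ->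
  delta_mx 0 i - phi0 *+ k = l *m B ->
  (p%:Z %| (j == i)%:Z - (phi0 ord0 j) 1%N * k%:Z)%Z.
Proof.
move=> B_res0 l_def; apply/dvdz_mod0P.
have := B_res0 l j; rewrite -l_def !(mxE, mulmxnE) padic_res_subMn // eqxx /=.
by rewrite padic_natE // pmodE // expr1 modzDml.
Qed.

(* If [B] vanishes modulo [p], then [L^*/L] surjects onto [(Z/p)^m]; reducing
   [e_i = k_i phi0] mod [p] for two indices gives [1 = (a_1 k_1)(a_0 k_0) =
   (a_1 k_0)(a_0 k_1) = 0] mod [p], with [a_j] the coordinates of [phi0]. *)
Lemma gram_res_neq0 : (1 < m)%N -> ~ (forall i j, (B i j) 1%N = 0).
Proof.
move=> m_gt1 B_res0.
have vB_res0 (v : 'rV_m) j : ((v *m B) 0 j) 1%N = 0.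
  rewrite mxE; elim/big_rec: _ => // k x _ x_res0.
  by apply: padic_res_add0 => //; apply: padic_res_mul0r.
pose i0 : 'I_m := Ordinal (ltnW m_gt1); pose i1 : 'I_m := Ordinal m_gt1.
have [k0 [l0 l0_def]] := phi0_gen (delta_mx 0 i0).
have [k1 [l1 l1_def]] := phi0_gen (delta_mx 0 i1).
have := gen_coord_modp i0 vB_res0 l0_def; have := gen_coord_modp i1 vB_res0 l0_def.
have := gen_coord_modp i0 vB_res0 l1_def; have := gen_coord_modp i1 vB_res0 l1_def.
rewrite !eqxx [i0 == i1]/= [i1 == i0]/= !sub0r !rpredN /=.
set a0 := (phi0 0 i0) 1%N; set a1 := (phi0 0 i1) 1%N.
move=> d11 d01 d10 d00.
have : (p%:Z %| (1 - a1 * k1%:Z) + (a1 * k1%:Z) * (1 - a0 * k0%:Z)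
     + (a1 * k0%:Z) * (a0 * k1%:Z))%Z.
  by apply: rpredD; [apply: rpredD; [|apply: dvdz_mull] | apply: dvdz_mulr].
have -> : (1 - a1 * k1%:Z) + (a1 * k1%:Z) * (1 - a0 * k0%:Z)
     + (a1 * k0%:Z) * (a0 * k1%:Z) = 1 by ring.
by rewrite dvdz1 absz_nat => /eqP p1; have := prime_gt1 p_prime; rewrite p1.
Qed.

Lemma exists_qform_unit : (1 < m)%N -> exists v, (qform A v) 1%N != 0.
Proof.
move=> m_gt1; apply: NNPP => no_unit; apply: (gram_res_neq0 m_gt1) => i j.
have Q_res0 v : (qform A v) 1%N = 0.
  by apply/eqP/negPn; apply: contra_notN no_unit => Qv; exists v.
rewrite -mxdot_delta_mul -bformE /bform.
by rewrite !padic_res_add0 ?padic_res_opp0 ?Q_res0.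
Qed.

Lemma SO_lat_acts_by_sign g : SO_lat A g -> acts_by A g 1 \/ acts_by A g (-1).
Proof.
move=> SOg; have [u gu] := acts_by_exists phi0_gen (SO_lat_in_lat SOg).
have [w0 w0_def] : exists w0, N%:R *: phi0 = w0 *m B.
  by have [w0 w0_def] := phi0_N; exists w0; rewrite scaler_nat.
have [y y_def] := acts_by_sqr_sub1 (fun x => @padic_mulpX_eq0 _ p_prime x _) w0_def SOg gu.
have /(dvdz_pX_sqr_sub1 p_prime p_neq2) := padic_dvd_int_mul p_prime (disc_value_unit w0_def) y_def.
by case=> dvd; [left|right]; apply: (acts_by_congr phi0_gen phi0_N gu).
Qed.

Lemma acts_by_1_N1 g : acts_by A g 1 -> acts_by A g (-1) -> False.
Proof.
have N_gt0 : (0 < N)%N by rewrite expn_gt0 prime_gt0.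
move=> g1 gN1; have := acts_by_uniq phi0_N phi0_order N_gt0 g1 gN1.
rewrite dvdzE absz_nat => /(dvdn_leq (isT : (0 < 2)%N)).
have p_le_N : (p <= N)%N by rewrite expnS leq_pmulr // expn_gt0 prime_gt0.
by rewrite leqNgt (leq_trans (prime_odd_gt2 p_prime p_neq2) p_le_N).
Qed.

(* For [m] even [-1] has determinant [1]; for [m] odd we correct its sign by
   a reflection in a vector of unit norm, which acts trivially on [L^*/L]. *)
Lemma exists_SO_lat_acts_by_N1 : m != 1%N -> exists g0, SO_lat A g0 /\ acts_by A g0 (-1).
Proof.
move=> m_neq1; case: (boolP (odd m)) => m_odd; last first.
  exists (- 1%:M); split; first split.
  - by move=> v; rewrite mulmxN mulmx1 !qformE mulNmx mxdotNl mxdotNr opprK.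
  - by rewrite -scaleN1r detZ det1 mulr1 -signr_odd (negbTE m_odd).
  - move=> phi; rewrite linearN /= trmx1 mulmxN mulmx1 scaler_int mulrN1z opprK addNr.
    exact: in_lat0.
have m_gt1 : (1 < m)%N by rewrite ltn_neqAle eq_sym m_neq1 odd_gt0.
have [v Qv_res] := exists_qform_unit m_gt1.
have [c Qv_c] := padic_unit_res p_prime Qv_res; rewrite mulrC in Qv_c.
exists (- refl_mx A v c); split; first split.
- apply: gram_inv_qform; first exact: padic_double_inj.
  by rewrite linearN /= !mulNmx mulmxN opprK refl_gram.
- by rewrite -scaleN1r detZ det_refl // -signr_odd m_odd expr1 mulrNN mulr1.
- move=> phi; rewrite linearN /= mulmxN scaler_int mulrN1z opprK addrC.
  rewrite refl_tr_mul; exact: in_lat_gram.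
Qed.

Lemma SO_lat_quotient_is_Z2 : m != 1%N -> quotient_is_Z2 (SO_lat A) (SO'_lat A).
Proof.
move=> /exists_SO_lat_acts_by_N1 [g0 [SOg0 g0N1]].
exists g0; split=> // [[_ /acts_trivially_on_discE g01]|g SOg].
  exact: acts_by_1_N1 g01 g0N1.
have SOg0' := SO_lat_adj SOg0.
have adj_g0N1 : acts_by A (\adj g0) (-1).
  have [adj_g01|adj_g0N1] := SO_lat_acts_by_sign SOg0'; last exact: adj_g0N1.
  have := acts_by_mul g0N1 adj_g01 (SO_lat_in_lat SOg0').
  rewrite (SO_lat_adjK SOg0) mulr1 => id_N1.
  by case: (acts_by_1_N1 (acts_by1 A) id_N1).
have [g1|gN1] := SO_lat_acts_by_sign SOg.
  by left; split; last exact/acts_trivially_on_discE.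
right; exists (\adj g0 *m g); split; last by rewrite mulmxA (SO_lat_adjKr SOg0) mul1mx.
split; first exact: SO_lat_mul.
apply/acts_trivially_on_discE.
by have := acts_by_mul gN1 adj_g0N1 (SO_lat_in_lat SOg0').
Qed.

End OddPrimeCyclicDiscriminant.

Theorem mainTheorem14 (p : nat) (m nu : nat) (A : 'M['Z_p[p]]_m) :
  prime p -> p != 2%N ->
  qf_nondegenerate A ->
  disc_cyclic_of_order A (p ^ nu) ->
  if (nu == 0%N) || (m == 1%N)
  then quotient_trivial (SO_lat A) (SO'_lat A)
  else quotient_is_Z2 (SO_lat A) (SO'_lat A).
Proof.
move=> p_prime p_neq2 _ disc_cyc.
case: nu disc_cyc => [|nu] disc_cyc /=; first exact: SO'_lat_disc_trivial.
case: (altP (m =P 1%N)) => [m1|m_neq1].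
  by move: A {disc_cyc}; rewrite m1 => A; apply: SO'_lat_rank1.
have [phi0 [gen phi0_N phi0_order]] := disc_cyclic_gen disc_cyc.
exact: SO_lat_quotient_is_Z2 p_prime p_neq2 gen phi0_N phi0_order m_neq1.
Qed.
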